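(* Let $X$ be a positive random variable with law $\mathbb{P}$. Suppose 1. there exist $\sigma\in(0,1]$ and $C_\sigma<\infty$ such that $\mathbb{P}(X\in I)\le C_\sigma|I|^\sigma$ for all Borel sets $I\subset[0,\infty)$ with Lebesgue measure $|I|\le1$; 2. there exists $\tau>0$ with $\mathbb{E}[X^\tau]<\infty$. Then for all $\alpha\in(0,1/2)$, $$\delta(X,\alpha)\ge\min\Big\{1,\Big(\frac{1-2\alpha}{C_\sigma}\Big)^{1/\sigma}\Big\}\Big(\frac{\alpha}{\mathbb{E}[X^\tau]}\Big)^{1/\tau}.$$
   Context: For $\alpha\in(0,1/2]$ the relative $\alpha$-width of a positive random variable $X$ is $\delta(X,\alpha):=1-\xi_-(X,\alpha)/\xi_+(X,\alpha)$, where $\xi_-(X,\alpha):=\sup\{\xi:\mathbb{P}(X<\xi)\le\alpha\}$ and $\xi_+(X,\alpha):=\inf\{\xi:\mathbb{P}(X>\xi)\le\alpha\}$. *)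

From HB Require Import structures.
From mathcomp Require Import all_boot all_order all_algebra.
From mathcomp Require Import all_classical all_reals all_analysis.
Set Implicit Arguments. Unset Strict Implicit. Unset Printing Implicit Defensive.
Import Order.TTheory GRing.Theory Num.Theory.
Local Open Scope classical_set_scope.
Local Open Scope ring_scope.

Definition xi_minus d (T : measurableType d) (R : realType)
  (P : probability T R) (X : T -> R) (a : R) : R :=
  sup [set xi : R | (P [set w | (X w < xi)%R] <= a%:E)%E].

Definition xi_plus d (T : measurableType d) (R : realType)
  (P : probability T R) (X : T -> R) (a : R) : R :=
  inf [set xi : R | (P [set w | (xi < X w)%R] <= a%:E)%E].

Definition rel_width d (T : measurableType d) (R : realType)
  (P : probability T R) (X : T -> R) (a : R) : R :=
  1 - xi_minus P X a / xi_plus P X a.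

From HB Require Import structures.
From mathcomp Require Import all_boot all_order all_algebra.
From mathcomp Require Import all_classical all_reals all_analysis.
From mathcomp Require Import lra ring.
Set Implicit Arguments.
Unset Strict Implicit.
Import Order.TTheory GRing.Theory Num.Theory.
Local Open Scope classical_set_scope.
Local Open Scope ring_scope.

(* Put xi- = sup {u | P(X < u) <= alpha} and xi+ = inf {v | P(X > v) <= alpha}.
   For u, v in these two sets at most 2 alpha of the mass lies outside [u, v],
   so P(X in [u, v]) >= 1 - 2 alpha; if u >= 0 and v - u < 1 the small-ball
   bound gives C (v - u)^sigma >= 1 - 2 alpha, whence
   v - u >= min(1, ((1 - 2 alpha) / C)^(1/sigma)) =: L.  As 0 is in the lower
   set (X > 0), this gives xi+ - xi- >= L.  Markov's inequality for X^tau
   bounds xi+ <= (E[X^tau] / alpha)^(1/tau), and delta = (xi+ - xi-) / xi+. *)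

Lemma powRVK (R : realType) (x p : R) : 0 <= x -> p != 0 -> (x `^ p^-1) `^ p = x.
Proof. by move=> x0 p0; rewrite -powRrM mulVf // powRr1. Qed.

Lemma powRV_le_of_le_mulpowR (R : realType) (c C l s : R) :
  0 < c -> 0 < s -> 0 <= l -> c <= C * l `^ s -> (c / C) `^ s^-1 <= l.
Proof.
move=> c0 s0 l0 hc.
have C0 : 0 < C.
  rewrite ltNge; apply/negP => C_le0.
  have : C * l `^ s <= 0 by apply: mulr_le0_ge0 => //; exact: powR_ge0.
  lra.
apply: (@le_trans _ _ ((l `^ s) `^ s^-1)).
  apply: ge0_ler_powR; rewrite ?nnegrE ?invr_ge0 ?powR_ge0 ?(ltW s0) //.
    by rewrite divr_ge0 ?ltW.
  by rewrite ler_pdivrMr // mulrC.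
by rewrite powRAC powRVK // lt0r_neq0.
Qed.

Lemma le_1subdiv (R : realFieldType) (a b L q : R) :
  0 <= a -> 0 <= L -> 0 <= q -> a + L <= b -> q * b <= 1 -> L * q <= 1 - a / b.
Proof.
move=> a0 L0 q0 hab hqb.
have [b_gt0|b_le0] := ltP 0 b; last first.
  have -> : b = 0 by apply/le_anti/andP; split; lra.
  by rewrite invr0 mulr0 subr0; nra.
rewrite -[1](divff (lt0r_neq0 b_gt0)) -mulrBl ler_pdivlMr //; nra.
Qed.

Lemma sup_addr_le_inf (R : realType) (A B : set R) (L : R) :
  A !=set0 -> B !=set0 -> (forall u v, A u -> B v -> u + L <= v) ->
  sup A + L <= inf B.
Proof.
move=> A0 B0 gap; apply: lb_le_inf => // v Bv.
by rewrite -lerBrDr; apply: ge_sup => // u Au; rewrite lerBrDr; exact: gap.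
Qed.

Lemma lebesgue_measure_itv_cc (R : realType) (u v : R) :
  u <= v -> lebesgue_measure `[u, v]%classic = (v - u)%:E.
Proof.
move=> uv; rewrite lebesgue_measure_itv /= lte_fin.
case: ltP => [_|vu]; first by rewrite EFinB.
have -> : v = u by apply/le_anti; rewrite vu uv.
by rewrite subrr.
Qed.

Section quantile_gap.
Variables (d : measure_display) (T : measurableType d) (R : realType).
Variables (P : probability T R) (X : {RV P >-> R}).

Lemma measurable_RV_lt (u : R) : measurable [set w | X w < u].
Proof.
have -> : [set w | X w < u] = X @^-1` `]-oo, u[%classic.
  by apply/seteqP; split=> w /=; rewrite in_itv.
exact: measurable_funPTI (measurable_itv _).
Qed.

Lemma measurable_RV_gt (u : R) : measurable [set w | u < X w].
Proof.
have -> : [set w | u < X w] = X @^-1` `]u, +oo[%classic.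
  by apply/seteqP; split=> w /=; rewrite in_itv /= andbT.
exact: measurable_funPTI (measurable_itv _).
Qed.

Lemma measurable_RV_ge (u : R) : measurable [set w | u <= X w].
Proof.
have -> : [set w | u <= X w] = X @^-1` `[u, +oo[%classic.
  by apply/seteqP; split=> w /=; rewrite in_itv /= andbT.
exact: measurable_funPTI (measurable_itv _).
Qed.

Lemma prob_itv_ge_tails (al u v : R) :
  (P [set w | (X w < u)%R] <= al%:E)%E -> (P [set w | (v < X w)%R] <= al%:E)%E ->
  ((1 - 2 * al)%:E <= P (X @^-1` `[u, v]%classic))%E.
Proof.
move=> hu hv; set I := X @^-1` _.
have mI : measurable I by exact: measurable_funPTI (measurable_itv _).
have mlo := measurable_RV_lt u; have mhi := measurable_RV_gt v.
have cover : [set: T] `<=` [set w | X w < u] `|` I `|` [set w | v < X w].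
  move=> w _; rewrite /I /= in_itv /=.
  case: (ltP (X w) u) => _; first by left; left.
  by case: (leP (X w) v) => _; [left; right | right].
have : (1 <= P [set w | (X w < u)%R] + P I + P [set w | (v < X w)%R])%E.
  rewrite -(probability_setT P); apply: (le_trans (le_measure _ _ _ cover)).
  - by rewrite inE.
  - by rewrite inE; apply: measurableU => //; exact: measurableU.
  apply: le_trans (measureU2 P (measurableU _ _ mlo mI) mhi) _.
  by rewrite leeD2r // measureU2.
rewrite -(fineK (fin_num_measure P _ mI)) => h1.
have := le_trans h1 (leeD (leeD hu (lexx _)) hv).
by rewrite -!EFinD !lee_fin => ?; lra.
Qed.

Lemma tail_bounds_le (al u v : R) : al < 1 / 2 ->
  (P [set w | (X w < u)%R] <= al%:E)%E -> (P [set w | (v < X w)%R] <= al%:E)%E -> u <= v.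
Proof.
move=> al12 hu hv; rewrite leNgt; apply/negP => vu.
have := prob_itv_ge_tails hu hv.
have -> : X @^-1` `[u, v]%classic = set0.
  apply/seteqP; split => w //=; rewrite in_itv /= => /andP[uw wv].
  by have := lt_le_trans vu (le_trans uw wv); rewrite ltxx.
by rewrite measure0 lee_fin; lra.
Qed.

Variable tau : R.
Hypotheses (hpos : forall w, 0 < X w) (htau : 0 < tau).

Lemma markov_powR (s : R) : 0 < s ->
  ((s `^ tau)%:E * P [set w | (s <= X w)%R] <= 'E_P[fun w => (X w `^ tau)%R])%E.
Proof.
move=> s0.
have := markov X s0 (measurable_realfun.measurable_powR tau)
  (fun r _ => powR_ge0 r tau) (ge0_ler_powR (ltW htau)).
have -> : (fun x => x `^ tau) \o Num.norm \o X = (fun w => X w `^ tau).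
  by apply: funext => w /=; rewrite gtr0_norm.
have -> // : [set w | (s%:E <= `|(X w)%:E|)%E] = [set w | (s <= X w)%R].
by apply/seteqP; split=> w /=; rewrite gtr0_norm // lee_fin.
Qed.

Hypothesis hmom : ('E_P[fun w => (X w `^ tau)%R] < +oo)%E.
Let M := fine 'E_P[fun w => (X w `^ tau)%R].

Lemma moment_fineE : ('E_P[fun w => (X w `^ tau)%R] = M%:E)%E.
Proof. by rewrite fineK // ge0_fin_numE // expectation_ge0 // => w; exact: powR_ge0. Qed.

Lemma moment_ge0 : 0 <= M.
Proof. by rewrite -lee_fin -moment_fineE expectation_ge0 // => w; exact: powR_ge0. Qed.

Lemma moment_tail_le (al t : R) : 0 < t -> M <= al * t ->
  (P [set w | (t `^ tau^-1 < X w)%R] <= al%:E)%E.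
Proof.
move=> t0 hM; set s := t `^ tau^-1.
have s0 : 0 < s by exact: powR_gt0.
have mS := measurable_RV_ge s.
have := markov_powR s0.
rewrite /s (powRVK (ltW t0) (lt0r_neq0 htau)) moment_fineE.
rewrite -(fineK (fin_num_measure P _ mS)) -EFinM lee_fin => markov_ineq.
apply: (@le_trans _ _ (P [set w | (s <= X w)%R])).
  apply: le_measure; rewrite ?inE //; first exact: measurable_RV_gt.
  by move=> w /ltW.
rewrite -(fineK (fin_num_measure P _ mS)) lee_fin -(ler_pM2l t0).
by apply: le_trans markov_ineq _; rewrite mulrC.
Qed.

Variable al : R.
Hypotheses (al0 : 0 < al) (al12 : al < 1 / 2).
Let lower := [set xi : R | (P [set w | (X w < xi)%R] <= al%:E)%E].
Let upper := [set xi : R | (P [set w | (xi < X w)%R] <= al%:E)%E].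

Lemma lower0 : lower 0.
Proof.
rewrite /lower /=; have -> : [set w | (X w < 0)%R] = set0.
  by apply/seteqP; split => w //=; rewrite ltNge (ltW (hpos w)).
by rewrite measure0 lee_fin ltW.
Qed.

Lemma upper_nonempty : upper !=set0.
Proof.
have M0 := moment_ge0.
(* [M + 1] rather than [M], so that the Markov threshold is positive even if [M = 0]. *)
exists (((M + 1) / al) `^ tau^-1); apply: moment_tail_le.
  by rewrite divr_gt0 //; lra.
by rewrite mulrC divfK ?lt0r_neq0 //; lra.
Qed.

Lemma xi_minus_ge0 : 0 <= xi_minus P X al.
Proof.
have [v uv] := upper_nonempty.
by apply: (ub_le_sup _ lower0); exists v => u lu; exact: tail_bounds_le al12 lu uv.
Qed.

Lemma moment_mul_xi_plus_le1 : (al / M) `^ tau^-1 * xi_plus P X al <= 1.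
Proof.
have := moment_ge0; rewrite le_eqVlt => /orP[/eqP M0|M_gt0].
  (* the junk value [al / 0 = 0] makes the bound trivial *)
  by rewrite -M0 invr0 mulr0 powR0 ?invr_neq0 ?lt0r_neq0 // mul0r ler01.
have upperM : upper ((M / al) `^ tau^-1).
  by apply: moment_tail_le; [exact: divr_gt0 | rewrite mulrC divfK ?lt0r_neq0].
have b_le : xi_plus P X al <= (M / al) `^ tau^-1.
  by apply: (ge_inf _ upperM); exists 0 => v uv; exact: tail_bounds_le al12 lower0 uv.
apply: le_trans (ler_wpM2l (powR_ge0 _ _) b_le) _.
rewrite -powRM ?divr_ge0 ?(ltW al0) ?(ltW M_gt0) //.
have -> : al / M * (M / al) = 1 by field; rewrite !lt0r_neq0.
by rewrite powR1.
Qed.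

Variables sigma C : R.
Hypothesis hsigma0 : 0 < sigma.
Hypothesis hreg : forall I : set R, measurable I -> I `<=` `[0, +oo[%classic ->
  (lebesgue_measure I <= 1)%E ->
  (P (X @^-1` I) <= (C * (fine (lebesgue_measure I)) `^ sigma)%:E)%E.
Let L := Num.min 1 (((1 - 2 * al) / C) `^ sigma^-1).

Lemma lower_upper_gap (u v : R) : lower u -> upper v -> u + L <= v.
Proof.
wlog u0 : u / 0 <= u.
  move=> gap lu uv; have [u0|u_lt0] := leP 0 u; first exact: gap.
  by apply: le_trans (gap 0 (lexx 0) lower0 uv); rewrite lerD2r ltW.
move=> lu uv; rewrite addrC -lerBrDr.
have [l1|l_lt1] := leP 1 (v - u); first by rewrite ge_min l1.
have uv_le := tail_bounds_le al12 lu uv.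
have I_len := lebesgue_measure_itv_cc uv_le.
have I_nneg : `[u, v]%classic `<=` `[0, +oo[%classic.
  by move=> x /=; rewrite !in_itv /= andbT => /andP[ux _]; exact: le_trans u0 ux.
have := hreg (measurable_itv `[u, v]) I_nneg; rewrite I_len lee_fin /=.
move=> /(_ (ltW l_lt1)) hr.
have := le_trans (prob_itv_ge_tails lu uv) hr; rewrite lee_fin => hc.
have K_le : ((1 - 2 * al) / C) `^ sigma^-1 <= v - u.
  by apply: (powRV_le_of_le_mulpowR _ hsigma0 _ hc); move: al12 uv_le; lra.
by rewrite ge_min K_le orbT.
Qed.

Lemma xi_minus_add_le_xi_plus : xi_minus P X al + L <= xi_plus P X al.
Proof.
apply: sup_addr_le_inf upper_nonempty lower_upper_gap.
by exists 0; exact: lower0.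
Qed.

End quantile_gap.

Theorem lemma3p8 (d : measure_display) (T : measurableType d) (R : realType)
  (P : probability T R) (X : {RV P >-> R})
  (hpos : forall w, 0 < X w)
  (sigma C : R) (hsigma0 : 0 < sigma) (hsigma1 : sigma <= 1)
  (hreg : forall I : set R, measurable I -> I `<=` `[0, +oo[%classic ->
     (lebesgue_measure I <= 1)%E ->
     (P (X @^-1` I) <= (C * (fine (lebesgue_measure I)) `^ sigma)%:E)%E)
  (tau : R) (htau : 0 < tau)
  (hmom : ('E_P[fun w => (X w `^ tau)%R] < +oo)%E) :
  forall alpha : R, 0 < alpha -> alpha < 1 / 2 ->
    Num.min 1 (((1 - 2 * alpha) / C) `^ sigma^-1)
      * ((alpha / fine 'E_P[fun w => (X w `^ tau)%R]) `^ tau^-1)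
    <= rel_width P X alpha.
Proof.
move=> al al0 al12; apply: le_1subdiv.
- exact: (xi_minus_ge0 hpos htau hmom al0 al12).
- by rewrite le_min ler01 powR_ge0.
- exact: powR_ge0.
- exact: (xi_minus_add_le_xi_plus hpos htau hmom al0 al12 hsigma0 hreg).
- exact: (moment_mul_xi_plus_le1 hpos htau hmom al0 al12).
Qed.
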